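(* Let $k\ge1$ and integers $0\le w<w'\le k$. Let $\mathcal{V}_w^k$ (resp. $\mathcal{V}_{w'}^k$) be the set of vectors in $\{0,1\}^k$ with exactly $w$ (resp. $w'$) ones, and let $L^k_{w,w'}=\prod_{i=0}^{w'-w-1}\frac{w'-i}{k-w-i}$. Let $\tilde{G}$ be the bipartite graph whose left vertex class is $\mathcal{V}_w^k$ and whose right vertex class is the disjoint union of $\lceil L^k_{w,w'}\rceil$ copies $\mathcal{V}^k_{w',1},\ldots,\mathcal{V}^k_{w',\lceil L^k_{w,w'}\rceil}$ of $\mathcal{V}_{w'}^k$, where $v\in\mathcal{V}_w^k$ is adjacent to the copy of $v'\in\mathcal{V}_{w'}^k$ in $\mathcal{V}^k_{w',l}$ (for each $l$) if and only if the support of $v$ is a subset of the support of $v'$. Then $\tilde{G}$ has a perfect matching with respect to $\mathcal{V}_w^k$.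
   Context: A perfect matching with respect to $\mathcal{V}_w^k$ is a set of $|\mathcal{V}_w^k|$ edges, no two of which share a vertex. The support of a vector is the set of indices of its nonzero entries. *)

From mathcomp Require Import all_boot all_order all_algebra.
Set Implicit Arguments. Unset Strict Implicit. Unset Printing Implicit Defensive.
Import Order.TTheory GRing.Theory Num.Theory.

Definition bvec (k : nat) := {ffun 'I_k -> bool}.

Definition supp (k : nat) (v : bvec k) : {set 'I_k} := [set i | v i].

Definition Vw (k w : nat) : {set bvec k} := [set v : bvec k | #|supp v| == w].

Definition Lkww (k w w' : nat) : rat :=
  (\prod_(0 <= i < w' - w) ((w' - i)%:R / (k - w - i)%:R))%R.

Definition ncopies (k w w' : nat) : nat := `|Num.ceil (Lkww k w w')|%N.

(* Right vertices: pairs (v', l) = copy of v' in the l-th copy V_{w',l}. *)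
Definition right_vtx (k w w' : nat) := (bvec k * 'I_(ncopies k w w'))%type.

Definition Gedge (k w w' : nat) (e : bvec k * right_vtx k w w') : bool :=
  [&& e.1 \in Vw k w, e.2.1 \in Vw k w' & supp e.1 \subset supp e.2.1].

Definition perfect_matching_wrt_left (k w w' : nat)
    (M : {set bvec k * right_vtx k w w'}) : Prop :=
  [/\ {in M, forall e, Gedge e},
      #|M| = #|Vw k w| &
      {in M &, forall e1 e2, e1 != e2 -> e1.1 != e2.1 /\ e1.2 != e2.2}].

From mathcomp Require Import all_boot all_order all_algebra.
From mathcomp Require Import zify.
Set Implicit Arguments. Unset Strict Implicit. Unset Printing Implicit Defensive.
Import Order.TTheory GRing.Theory Num.Theory.

(* Falling factorials give L = C(w', w) / C(k - w, k - w'). A left vertex v is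
   adjacent to the ceil(L) copies of each of the C(k - w, k - w') weight-w'
   supersets of its support, and a right vertex to at most the C(w', w)
   weight-w subsets of its support; so left degrees dominate right degrees, and
   double counting the edges leaving a set S of left vertices gives
   |N(S)| >= |S|. Hall's marriage theorem, proved by the Halmos-Vaughan
   induction, then yields the matching. *)

Section HallMarriage.
Variables L R : finType.
Implicit Types (E : L -> {set R}) (A S T : {set L}).

Definition neighbours E S : {set R} := \bigcup_(x in S) E x.

Definition hall_condition E A := forall S, S \subset A -> #|S| <= #|neighbours E S|.

Definition sdr E A (f : L -> R) :=
  {in A, forall x, f x \in E x} /\ {in A &, injective f}.

Lemma hall_condition_sub E A S :
  S \subset A -> hall_condition E A -> hall_condition E S.
Proof. by move=> sSA hallA T sTS; apply/hallA/(subset_trans sTS). Qed.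

Lemma hall_condition_setD_neighbours E A S :
    S \subset A -> #|neighbours E S| <= #|S| -> hall_condition E A ->
  hall_condition (fun x => E x :\: neighbours E S) (A :\: S).
Proof.
move=> sSA tightS hallA T; rewrite subsetD => /andP[sTA disTS].
have sub : neighbours E (T :|: S) \subset
           neighbours (fun x => E x :\: neighbours E S) T :|: neighbours E S.
  apply/subsetP=> y /bigcupP[x]; rewrite !inE => /orP[xT|xS] yE.
    have [_|yNS] := boolP (y \in neighbours E S); rewrite ?orbT // orbF.
    by apply/bigcupP; exists x; rewrite // inE yNS.
  by apply/orP; right; apply/bigcupP; exists x.
have sTSA : T :|: S \subset A by rewrite subUset sTA.
have := hallA _ sTSA; rewrite cardsU (disjoint_setI0 disTS) cards0 subn0.
have := leq_trans (subset_leq_card sub) (leq_card_setU _ _).1; lia.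
Qed.

Lemma hall_condition_setD1 E A a b : a \in A ->
    (forall T, T \proper A -> T != set0 -> #|T| < #|neighbours E T|) ->
  hall_condition (fun x => E x :\ b) (A :\ a).
Proof.
move=> aA expandA T sTAa.
have [->|nzT] := eqVneq T set0; first by rewrite cards0.
have sub : neighbours E T :\ b \subset neighbours (fun x => E x :\ b) T.
  apply/subsetP=> y; rewrite inE => /andP[yb /bigcupP[x xT yE]].
  by apply/bigcupP; exists x; rewrite // inE yb.
have := expandA T (sub_proper_trans sTAa (properD1 aA)) nzT.
have := subset_leq_card sub; have := cardsD1 b (neighbours E T).
case: (b \in _) => /=; lia.
Qed.

Lemma sdr_glue E A S (F : {set R}) f1 (f2 : L -> R) :
    sdr E S f1 -> f1 @: S \subset F -> sdr (fun x => E x :\: F) (A :\: S) f2 ->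
  sdr E A (fun x => if x \in S then f1 x else f2 x).
Proof.
move=> [f1E f1inj] f1F [f2E f2inj].
have f2P x : x \in A -> x \notin S -> f2 x \notin F /\ f2 x \in E x.
  by move=> xA xS; apply/andP; rewrite -in_setD f2E // inE xS.
split=> [x xA | x y xA yA]; first by case: ifPn => xS; [apply: f1E | case: (f2P x)].
case: ifPn => xS; case: ifPn => yS.
- exact: f1inj.
- by move=> fxy; case: (f2P y yA yS); rewrite -fxy (subsetP f1F) ?imset_f.
- by move=> fxy; case: (f2P x xA xS); rewrite fxy (subsetP f1F) ?imset_f.
- by apply: f2inj; rewrite inE ?xS ?yS.
Qed.

Theorem hall_marriage (r0 : R) E A : hall_condition E A -> exists f, sdr E A f.
Proof.
have [n] := ubnP #|A|; elim: n E A => // n IH E A /ltnSE leAn hallA.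
have [->|[a aA]] := set_0Vmem A; first by exists (fun=> r0); split=> x; rewrite inE.
(* Either some nonempty proper S has no surplus, and S and A :\: S are matched
   separately, the latter avoiding N(S); or every such S has a surplus, and an
   arbitrary edge at a can be put in the matching. *)
have [/existsP[S /and3P[ltSA nzS tightS]]|expandA] := boolP [exists S : {set L},
    [&& S \proper A, S != set0 & #|neighbours E S| <= #|S|]].
- have sSA := proper_sub ltSA.
  have [f1 f1S] := IH E S (leq_trans (proper_card ltSA) leAn) (hall_condition_sub sSA hallA).
  have ltAS : #|A :\: S| < n.
    by move: nzS; rewrite (cardsDS sSA) -card_gt0; have := subset_leq_card sSA; lia.
  have [f2 f2S] := IH _ _ ltAS (hall_condition_setD_neighbours sSA tightS hallA).
  have f1N : f1 @: S \subset neighbours E S.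
    by apply/subsetP=> _ /imsetP[x xS ->]; apply/bigcupP; exists x; last exact: f1S.1.
  by exists (fun x => if x \in S then f1 x else f2 x); apply: sdr_glue f1S f1N f2S.
- have expand T : T \proper A -> T != set0 -> #|T| < #|neighbours E T|.
    move=> ltTA nzT; rewrite ltnNge; apply: contra expandA => leNT.
    by apply/existsP; exists T; rewrite ltTA nzT.
  have [b bEa] : exists b, b \in E a.
    have := hallA [set a]; rewrite sub1set aA cards1 /neighbours big_set1 card_gt0.
    by move=> /(_ isT) /set0Pn.
  have ltAa : #|A :\ a| < n by move: leAn; rewrite (cardsD1 a A) aA.
  have [f2 f2S] := IH _ _ ltAa (hall_condition_setD1 b aA expand).
  exists (fun x => if x \in [set a] then b else f2 x).
  apply: (sdr_glue (f1 := fun=> b)) f2S; last by rewrite imset_set1.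
  by split=> [x /set1P-> | x y /set1P-> /set1P->].
Qed.

Lemma hall_condition_of_degrees E A dl dr : dr <= dl -> 0 < dl ->
    {in A, forall x, dl <= #|E x|} ->
    (forall y, #|[set x in A | y \in E x]| <= dr) ->
  hall_condition E A.
Proof.
move=> le_dr_dl dl_gt0 degE codegE S sSA.
have lower : #|S| * dl <= \sum_(x in S) #|E x|.
  by rewrite -sum_nat_const; apply: leq_sum => x xS; apply/degE/(subsetP sSA).
have upper : \sum_(x in S) #|E x| <= #|neighbours E S| * dr.
  rewrite (eq_bigr (fun x => \sum_(y in E x) 1)) => [|x _]; last by rewrite sum1_card.
  rewrite (exchange_big_dep (mem (neighbours E S))) => [|x y xS yE]; last first.
    by apply/bigcupP; exists x.
  rewrite -sum_nat_const; apply: leq_sum => y _; rewrite sum1dep_card.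
  apply: leq_trans (codegE y); apply: subset_leq_card; apply/subsetP=> x.
  by rewrite !inE => /andP[xS ->]; rewrite (subsetP sSA).
rewrite -(leq_pmul2r dl_gt0); apply: leq_trans lower (leq_trans upper _).
exact: leq_mul.
Qed.

End HallMarriage.

Lemma card_supsets (T : finType) (A : {set T}) m : m <= #|T| ->
  #|[set B : {set T} | A \subset B & #|B| == m]| = 'C(#|T| - #|A|, #|T| - m).
Proof.
move=> le_mT; rewrite -(card_preimset _ (@setC_inj T)) -{1}(cardsC A) addKn.
rewrite -cards_draws; apply: eq_card => B; rewrite !inE subsetC; congr (_ && _).
by have cardB := cardsC B; apply/eqP/eqP; lia.
Qed.

Lemma Lkww_ffact k w w' :
  Lkww k w w' = ((w' ^_ (w' - w))%:R / ((k - w) ^_ (w' - w))%:R)%R.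
Proof. by rewrite /Lkww big_mkord prodf_div -!natr_prod -!ffact_prod. Qed.

Lemma Lkww_le_ncopies k w w' : (Lkww k w w' <= (ncopies k w w')%:R)%R.
Proof.
have L_ge0 : (0 <= Lkww k w w')%R by apply: prodr_ge0 => i _; rewrite divr_ge0.
rewrite /ncopies natr_absz ger0_norm ?ceil_ge // ceil_ge0.
by apply: lt_le_trans L_ge0; rewrite ltrN10.
Qed.

Lemma binomial_le_ncopies_mul k w w' : w <= w' -> w' <= k ->
  'C(w', w) <= ncopies k w w' * 'C(k - w, k - w').
Proof.
move=> le_ww' le_w'k.
have -> : 'C(k - w, k - w') = 'C(k - w, w' - w).
  by rewrite -bin_sub; [congr 'C(_, _) | ]; lia.
rewrite -(bin_sub le_ww') -(leq_pmul2r (fact_gt0 (w' - w))) -mulnA !bin_ffact.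
rewrite -(ler_nat rat) natrM -ler_pdivrMr ?ltr0n ?ffact_gt0 -?Lkww_ffact; last lia.
exact: Lkww_le_ncopies.
Qed.

Lemma supp_bij k : bijective (@supp k).
Proof.
exists (fun B : {set 'I_k} => [ffun i => i \in B]) => [v | B].
  by apply/ffunP=> i; rewrite ffunE inE.
by apply/setP=> i; rewrite !inE ffunE.
Qed.

Lemma card_supp_preimset k (P : {set {set 'I_k}}) : #|@supp k @^-1: P| = #|P|.
Proof. exact/on_card_preimset/onW_bij/supp_bij. Qed.

Lemma card_Vw_subsets k w (S : {set 'I_k}) :
  #|[set v in Vw k w | supp v \subset S]| = 'C(#|S|, w).
Proof.
rewrite -cards_draws -card_supp_preimset.
by apply: eq_card => v; rewrite !inE andbC.
Qed.

Lemma card_Vw_supsets k w (S : {set 'I_k}) : w <= k ->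
  #|[set v in Vw k w | S \subset supp v]| = 'C(k - #|S|, k - w).
Proof.
move=> le_wk; have := @card_supsets _ S w; rewrite card_ord => <- //.
by rewrite -card_supp_preimset; apply: eq_card => v; rewrite !inE andbC.
Qed.

Definition Gadj k w w' (v : bvec k) : {set right_vtx k w w'} := [set r | Gedge (v, r)].

Lemma card_Gadj k w w' (v : bvec k) : w' <= k -> v \in Vw k w ->
  #|Gadj w w' v| = ncopies k w w' * 'C(k - w, k - w').
Proof.
move=> le_w'k vV.
have -> : 'C(k - w, k - w') = #|[set v' in Vw k w' | supp v \subset supp v']|.
  by move: vV; rewrite inE card_Vw_supsets // => /eqP ->.
rewrite mulnC -[X in _ * X]card_ord -cardsT -cardsX.
by apply: eq_card => -[v' l]; rewrite !inE /Gedge /= vV !inE andbT.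
Qed.

Lemma card_Gadj_inv_le k w w' (r : right_vtx k w w') :
  #|[set v in Vw k w | r \in Gadj w w' v]| <= 'C(w', w).
Proof.
case: r => v' l; have [v'V | v'NV] := boolP (v' \in Vw k w').
  have -> : 'C(w', w) = #|[set v in Vw k w | supp v \subset supp v']|.
    by move: v'V; rewrite card_Vw_subsets inE => /eqP ->.
  by apply/eq_leq/eq_card => v; rewrite !inE /Gedge /= v'V !inE; case: (_ == w).
by rewrite eq_card0 // => v; rewrite !inE /Gedge /= (negbTE v'NV) !andbF.
Qed.

Lemma perfect_matching_of_sdr k w w' (f : bvec k -> right_vtx k w w') :
  sdr (Gadj w w') (Vw k w) f ->
  perfect_matching_wrt_left [set (v, f v) | v in Vw k w].
Proof.
case=> fE finj; split.
- by move=> _ /imsetP[v vV ->]; have := fE v vV; rewrite inE.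
- by apply: card_imset => v1 v2 [].
- move=> _ _ /imsetP[v1 v1V ->] /imsetP[v2 v2V ->] ne12; split => /=.
    by apply: contraNneq ne12 => ->.
  by apply: contraNneq ne12 => /(finj _ _ v1V v2V) ->.
Qed.

Theorem lemma10 (k w w' : nat) :
  (1 <= k)%N -> (w < w')%N -> (w' <= k)%N ->
  exists M : {set bvec k * right_vtx k w w'}, perfect_matching_wrt_left M.
Proof.
move=> _ /ltnW le_ww' le_w'k.
have le_C := binomial_le_ncopies_mul le_ww' le_w'k.
have C_gt0 : 0 < 'C(w', w) by rewrite bin_gt0.
have ncopies_gt0 : 0 < ncopies k w w'.
  by rewrite lt0n; apply: contraTneq le_C => ->; rewrite mul0n -ltnNge.
have hall : hall_condition (Gadj w w') (Vw k w).
  apply: (hall_condition_of_degrees le_C) => [|v vV|]; last exact: card_Gadj_inv_le.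
  - exact: leq_trans C_gt0 le_C.
  - by rewrite card_Gadj.
have [f fS] := hall_marriage ([ffun=> false], Ordinal ncopies_gt0) hall.
by exists [set (v, f v) | v in Vw k w]; apply: perfect_matching_of_sdr.
Qed.
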